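(* Let the setting of the context hold, fix $x\in\mathcal{X}$, and assume $|g_t(z)|\le G$ for all $z$ and $t\in\{0,1\}$. Define $\epsilon_F(x):=\sum_t p(t\mid x)\,\epsilon_{F,t}(x)$ and $\epsilon_{CF}(x):=\sum_t p(1-t\mid x)\,\epsilon_{CF,t}(x)$. Then $$\epsilon_f(x)\le 2\big(G^2(\epsilon_F(x)+\epsilon_{CF}(x))-\mathbb{V}_Y(x)\big),$$ where $\mathbb{V}_Y(x):=\mathbb{E}_{q(z\mid x)}\sum_t\mathbb{E}_{p_{Y(t)\mid\mathbb{P}_t}(y\mid z)}(y-j_t(z))^2$.
   Context: Binary treatment $T\in\{0,1\}$, covariates $X\in\mathcal{X}$, real-valued potential outcomes $Y(t)$, observed $Y=Y(T)$, observational distribution $p(x,y,t)$, exchangeability $Y(t)\perp T\mid X$. Data generating assumption: $Y=f^*(\mathbb{M}(X),T)+e$ with $e$ zero-mean exogenous noise, and $\mathbb{E}(Y(t)\mid X)=j_t(\mathbb{P}_t(X))$ for functions $\mathbb{P}_t$ and injective $j_t$, where $Y(t)\perp X\mid\mathbb{P}_t(X)$; $p_{Y(t)\mid\mathbb{P}_t}(y\mid P)$ denotes the conditional density of $Y(t)$ given $\mathbb{P}_t(X)=P$. Let $f_t,g_t$ be functions of $z$ and $q_\phi(z\mid x,y,t)$ a conditional density; $q_t(z\mid x):=\mathbb{E}_{p(y\mid x,t)}q_\phi(z\mid x,y,t)$, $q(z\mid x):=\mathbb{E}_{p(y,t\mid x)}q_\phi(z\mid x,y,t)$. Define $\mathcal{L}_f(z,t):=g_t(z)^{-2}\int(y-f_t(z))^2p_{Y(t)\mid\mathbb{P}_t}(y\mid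 z)\,dy$, $\epsilon_{F,t}(x):=\mathbb{E}_{q_t(z\mid x)}\mathcal{L}_f(z,t)$, $\epsilon_{CF,t}(x):=\mathbb{E}_{q_{1-t}(z\mid x)}\mathcal{L}_f(z,t)$, and $\epsilon_f(x):=\mathbb{E}_{q(z\mid x)}\big((f_1(z)-f_0(z))-(j_1(z)-j_0(z))\big)^2$. *)

From HB Require Import structures.
From mathcomp Require Import all_boot all_order all_algebra.
From mathcomp Require Import all_classical all_reals all_analysis.
Set Implicit Arguments. Unset Strict Implicit. Unset Printing Implicit Defensive.
Import Order.TTheory GRing.Theory Num.Theory.
Local Open Scope ring_scope.
Local Open Scope ereal_scope.

(* Conventions: the binary treatment t is a bool (true = 1, false = 0, 1-t = ~~ t).
   Outcomes y live in R with Lebesgue measure; the latent z lives in a measurable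
   space Z with a reference measure [mu] w.r.t. which q_phi(z|x,y,t) is a density.
   - pT x t          = p(t | x)
   - pY x t y        = p(y | x, t)            (density in y)
   - qphi x y t z    = q_phi(z | x, y, t)     (density in z w.r.t. mu)
   - pYP t z y       = p_{Y(t)|P_t}(y | z)    (density in y)
   - f t z, g t z, j t z = f_t(z), g_t(z), j_t(z). *)

Section Defs.
Context {R : realType} {X : Type} {d : measure_display} {Z : measurableType d}.
Variable mu : {measure set Z -> \bar R}.

Notation leb := (@lebesgue_measure R).

Definition q_t (pY : X -> bool -> R -> R) (qphi : X -> R -> bool -> Z -> R)
    (x : X) (t : bool) (z : Z) : \bar R :=
  \int[leb]_y (pY x t y * qphi x y t z)%:E.

(* q(z|x) := E_{p(y,t|x)} q_phi(z|x,y,t), with p(y,t|x) = p(t|x) p(y|x,t) *)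
Definition q_mix (pT : X -> bool -> R) (pY : X -> bool -> R -> R)
    (qphi : X -> R -> bool -> Z -> R) (x : X) (z : Z) : \bar R :=
  \sum_(t : bool) ((pT x t)%:E * q_t pY qphi x t z).

Definition L_f (f g : bool -> Z -> R) (pYP : bool -> Z -> R -> R)
    (z : Z) (t : bool) : \bar R :=
  ((g t z) ^- 2)%:E * \int[leb]_y (((y - f t z) ^+ 2) * pYP t z y)%:E.

Definition eps_F_t pY qphi f g pYP (x : X) (t : bool) : \bar R :=
  \int[mu]_z (q_t pY qphi x t z * L_f f g pYP z t).

Definition eps_CF_t pY qphi f g pYP (x : X) (t : bool) : \bar R :=
  \int[mu]_z (q_t pY qphi x (~~ t) z * L_f f g pYP z t).

Definition eps_f pT pY qphi (f j : bool -> Z -> R) (x : X) : \bar R :=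
  \int[mu]_z (q_mix pT pY qphi x z *
     (((f true z - f false z) - (j true z - j false z)) ^+ 2)%:E).

Definition eps_F pT pY qphi f g pYP (x : X) : \bar R :=
  \sum_(t : bool) ((pT x t)%:E * eps_F_t pY qphi f g pYP x t).

Definition eps_CF pT pY qphi f g pYP (x : X) : \bar R :=
  \sum_(t : bool) ((pT x (~~ t))%:E * eps_CF_t pY qphi f g pYP x t).

Definition V_Y pT pY qphi (j : bool -> Z -> R) (pYP : bool -> Z -> R -> R)
    (x : X) : \bar R :=
  \int[mu]_z (q_mix pT pY qphi x z *
     \sum_(t : bool) \int[leb]_y (((y - j t z) ^+ 2) * pYP t z y)%:E).

End Defs.

From HB Require Import structures.
From mathcomp Require Import all_boot all_order all_algebra.
From mathcomp Require Import all_classical all_reals all_analysis measurable_realfun.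
From mathcomp Require Import ring lra.
Set Implicit Arguments. Unset Strict Implicit. Unset Printing Implicit Defensive.
Import Order.TTheory GRing.Theory Num.Theory.
Local Open Scope ring_scope.

(* Bias-variance: g_t(z)^2 L_f(z,t) = Var(Y(t) | z) + (f_t(z) - j_t(z))^2, so G^2 L_f(z,t)
   dominates both terms. Since q(z|x) = sum_t p(t|x) q_t(z|x), the factual and counterfactual
   risks together weight each loss by all of q: eps_F + eps_CF = E_q [L_f(z,1) + L_f(z,0)].
   With a_t = f_t - j_t, the inequality (a_1 - a_0)^2 <= 2 (a_1^2 + a_0^2) then bounds the
   integrand of eps_f + 2 V_Y by 2 G^2 (L_f(z,1) + L_f(z,0)) pointwise in z. *)

Lemma sqr_sub_le (R : realDomainType) (a b : R) : (a - b) ^+ 2 <= 2 * (a ^+ 2 + b ^+ 2).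
Proof. have := sqr_ge0 (a + b); nra. Qed.

Lemma ler_pMinv_sqr (R : realFieldType) (G g v : R) :
  g != 0 -> `|g| <= G -> 0 <= v -> v <= G ^+ 2 * g ^- 2 * v.
Proof.
move=> g_neq0 gG v_ge0; rewrite ler_peMl // -(mulfV (expf_neq0 2 g_neq0)).
rewrite ler_wpM2r ?invr_ge0 ?sqr_ge0 // -real_normK ?num_real //.
by rewrite ler_sqr ?nnegrE ?(le_trans _ gG).
Qed.

Lemma sqr_sub_variance_le (R : realFieldType) (G g1 g0 V1 V0 e1 e0 : R) :
  g1 != 0 -> g0 != 0 -> `|g1| <= G -> `|g0| <= G -> 0 <= V1 -> 0 <= V0 ->
  (e1 - e0) ^+ 2 + 2 * (V1 + V0) <=
  2 * G ^+ 2 * (g1 ^- 2 * (V1 + e1 ^+ 2) + g0 ^- 2 * (V0 + e0 ^+ 2)).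
Proof.
move=> g1_neq0 g0_neq0 g1G g0G V1_ge0 V0_ge0.
have := ler_pMinv_sqr g1_neq0 g1G (addr_ge0 V1_ge0 (sqr_ge0 e1)).
have := ler_pMinv_sqr g0_neq0 g0G (addr_ge0 V0_ge0 (sqr_ge0 e0)).
have := sqr_sub_le e1 e0.
rewrite -!mulrA; lra.
Qed.

Section bias_variance.
Context {R : realType}.
Local Notation leb := (@lebesgue_measure R).
Local Open Scope ereal_scope.
Variables (p : R -> R) (m : R).
Hypotheses (p_ge0 : forall y, (0 <= p y)%R) (mp : measurable_fun setT p)
  (p_int1 : \int[leb]_y (p y)%:E = 1)
  (yp_int : leb.-integrable setT (fun y => (y * p y)%:E))
  (y2p_int : leb.-integrable setT (fun y => (y ^+ 2 * p y)%:E))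
  (p_mean : \int[leb]_y (y * p y)%:E = m%:E).

Lemma integral_sqr_sub c : \int[leb]_y (((y - c) ^+ 2) * p y)%:E =
  (fine (\int[leb]_y (y ^+ 2 * p y)%:E) - 2 * c * m + c ^+ 2)%:E.
Proof.
have p_int : leb.-integrable setT (fun y => (p y)%:E).
  apply/integrableP; split; first exact/measurable_EFinP.
  by under eq_integral do rewrite gee0_abs ?lee_fin//; rewrite p_int1 ltry.
transitivity (\int[leb]_y ((y ^+ 2 * p y)%:E +
    ((- (2 * c))%:E * (y * p y)%:E + (c ^+ 2)%:E * (p y)%:E))).
  by apply: eq_integral => y _; rewrite -!EFinM -!EFinD; congr EFin; ring.
rewrite integralD //; last by apply: integrableD => //; exact: integrableZl.
rewrite integralD //; try exact: integrableZl.
rewrite !integralZl // p_mean p_int1.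
rewrite -(fineK (integrable_fin_num measurableT y2p_int)) mule1 -EFinM -!EFinD.
by congr EFin; ring.
Qed.

Lemma integral_sqr_sub_fin_num c :
  \int[leb]_y (((y - c) ^+ 2) * p y)%:E \is a fin_num.
Proof. by rewrite integral_sqr_sub. Qed.

Lemma integral_sqr_sub_mean c : \int[leb]_y (((y - c) ^+ 2) * p y)%:E =
  \int[leb]_y (((y - m) ^+ 2) * p y)%:E + ((c - m) ^+ 2)%:E.
Proof. by rewrite !integral_sqr_sub -EFinD; congr EFin; ring. Qed.

End bias_variance.

Lemma measurable_funV_gt0 {R : realType} d (T : measurableType d) (h : T -> R) :
  measurable_fun setT h -> (forall t, 0 < h t) ->
  measurable_fun setT (fun t => (h t)^-1).
Proof.
move=> mh h_gt0.
have -> : (fun t => (h t)^-1) = (fun t => expR (- ln (h t))).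
  by apply: funext => t; rewrite expRN lnK // posrE.
apply: measurableT_comp; first exact: measurable_expR.
apply: measurableT_comp; first exact: measurable_funN.
by apply: measurableT_comp; first exact: measurable_ln.
Qed.

Local Open Scope ereal_scope.

Lemma measurable_fun_integral_ge0 {R : realType} d1 d2 (T1 : measurableType d1)
    (T2 : measurableType d2) (nu : {sigma_finite_measure set T2 -> \bar R})
    (h : T1 * T2 -> R) :
  measurable_fun setT h -> (forall z, (0 <= h z)%R) ->
  measurable_fun setT (fun x => \int[nu]_y (h (x, y))%:E).
Proof.
move=> mh h_ge0.
exact: (@measurable_fun_fubini_tonelli_F _ _ _ _ _ nu (EFin \o h)
  (measurableT_comp (@EFin_measurable R setT) mh) h_ge0).
Qed.

Lemma measurable_fun_integral_sqr_sub {R : realType} d (Z : measurableType d)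
    (c : Z -> R) (p : Z -> R -> R) :
  measurable_fun setT c -> measurable_fun setT (fun zy : Z * R => p zy.1 zy.2) ->
  (forall z y, (0 <= p z y)%R) ->
  measurable_fun setT
    (fun z => \int[@lebesgue_measure R]_y (((y - c z) ^+ 2) * p z y)%:E).
Proof.
move=> mc mp p_ge0.
apply: (@measurable_fun_integral_ge0 _ _ _ _ _ (@lebesgue_measure R)
  (fun zy : Z * R => ((zy.2 - c zy.1) ^+ 2 * p zy.1 zy.2)%R)).
  apply: measurable_funM => //; apply: measurable_funX.
  exact: measurable_funB measurable_snd (measurableT_comp mc measurable_fst).
by move=> zy; rewrite mulr_ge0 ?sqr_ge0.
Qed.

Lemma ge0_le_integral_weighted d (T : measurableType d) {R : realType}
    (mu : {measure set T -> \bar R}) (w a b c : T -> \bar R) (k l : R) :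
  (0 <= k)%R -> (0 <= l)%R ->
  measurable_fun setT w -> measurable_fun setT a ->
  measurable_fun setT b -> measurable_fun setT c ->
  (forall z, 0 <= w z) -> (forall z, 0 <= a z) ->
  (forall z, 0 <= b z) -> (forall z, 0 <= c z) ->
  (forall z, a z + k%:E * b z <= l%:E * c z) ->
  \int[mu]_z (w z * a z) + k%:E * \int[mu]_z (w z * b z) <=
  l%:E * \int[mu]_z (w z * c z).
Proof.
move=> k_ge0 l_ge0 mw ma mb mc w_ge0 a_ge0 b_ge0 c_ge0 abc.
have wa_ge0 z : 0 <= w z * a z by rewrite mule_ge0.
have wb_ge0 z : 0 <= w z * b z by rewrite mule_ge0.
have wc_ge0 z : 0 <= w z * c z by rewrite mule_ge0.
have mwb : measurable_fun setT (fun z => w z * b z) by exact: emeasurable_funM.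
rewrite -ge0_integralZl_EFin // -ge0_integralD //; last 3 first.
- exact: emeasurable_funM.
- by move=> z _; rewrite mule_ge0.
- exact: measurable_funeM.
rewrite -ge0_integralZl_EFin //; last exact: emeasurable_funM.
apply: ge0_le_integral => //.
- by move=> z _; rewrite adde_ge0 ?mule_ge0.
- by apply: emeasurable_funD; [exact: emeasurable_funM | exact: measurable_funeM].
- exact/measurable_funeM/emeasurable_funM.
move=> z _; rewrite muleCA -ge0_muleDr ?mule_ge0 // muleCA.
exact: lee_wpmul2l.
Qed.

Section mixture.
Context {R : realType} {X : Type} {d : measure_display} {Z : measurableType d}.
Variables (mu : {measure set Z -> \bar R}) (pT : X -> bool -> R)
  (pY : X -> bool -> R -> R) (qphi : X -> R -> bool -> Z -> R) (x : X).
Hypotheses (pT_ge0 : forall t, (0 <= pT x t)%R)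
  (pY_ge0 : forall t y, (0 <= pY x t y)%R)
  (mpY : forall t, measurable_fun setT (pY x t))
  (qphi_ge0 : forall y t z, (0 <= qphi x y t z)%R)
  (mqphi : forall t, measurable_fun setT (fun yz : R * Z => qphi x yz.1 t yz.2)).

Lemma q_t_ge0 t z : 0 <= q_t pY qphi x t z.
Proof. by apply: integral_ge0 => y _; rewrite lee_fin mulr_ge0. Qed.

Lemma measurable_q_t t : measurable_fun setT (q_t pY qphi x t).
Proof.
apply: (@measurable_fun_integral_ge0 _ _ _ _ _ (@lebesgue_measure R)
  (fun zy : Z * R => (pY x t zy.2 * qphi x zy.2 t zy.1)%R)).
  apply: measurable_funM; first exact: measurableT_comp (mpY t) measurable_snd.
  exact: measurableT_comp (mqphi t) (measurable_fun_pair measurable_snd measurable_fst).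
by move=> zy; rewrite mulr_ge0.
Qed.

Lemma q_mix_ge0 z : 0 <= q_mix pT pY qphi x z.
Proof. by rewrite sume_ge0 // => t _; rewrite mule_ge0 ?lee_fin ?q_t_ge0. Qed.

Lemma integral_q_mix (h : Z -> \bar R) :
  measurable_fun setT h -> (forall z, 0 <= h z) ->
  \int[mu]_z (q_mix pT pY qphi x z * h z) =
  \sum_(t : bool) (pT x t)%:E * \int[mu]_z (q_t pY qphi x t z * h z).
Proof.
move=> mh h_ge0.
transitivity (\int[mu]_z \sum_(t : bool) ((pT x t)%:E * (q_t pY qphi x t z * h z))).
  apply: eq_integral => z _; rewrite /q_mix ge0_sume_distrl => [|t _].
    by apply: eq_bigr => t _; rewrite muleA.
  by rewrite mule_ge0 ?lee_fin ?q_t_ge0.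
have qh_ge0 t z : 0 <= q_t pY qphi x t z * h z by rewrite mule_ge0 ?q_t_ge0.
have mqh t : measurable_fun setT (fun z => q_t pY qphi x t z * h z).
  exact: emeasurable_funM (measurable_q_t t) mh.
rewrite ge0_integral_sum // => [|t|t z _].
- by apply: eq_bigr => t _; rewrite ge0_integralZl_EFin.
- exact: measurable_funeM.
- by rewrite mule_ge0 ?lee_fin.
Qed.

Lemma measurable_q_mix : measurable_fun setT (q_mix pT pY qphi x).
Proof.
rewrite /q_mix; apply: emeasurable_sum => t.
exact/measurable_funeM/measurable_q_t.
Qed.

Lemma eps_F_add_eps_CF (f g : bool -> Z -> R) (pYP : bool -> Z -> R -> R) :
  (forall t, measurable_fun setT (fun z => L_f f g pYP z t)) ->
  (forall t z, 0 <= L_f f g pYP z t) ->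
  eps_F mu pT pY qphi f g pYP x + eps_CF mu pT pY qphi f g pYP x =
  \int[mu]_z (q_mix pT pY qphi x z * (L_f f g pYP z true + L_f f g pYP z false)).
Proof.
move=> mL L_ge0.
have qL_ge0 s t z : 0 <= q_t pY qphi x s z * L_f f g pYP z t.
  by rewrite mule_ge0 ?q_t_ge0.
have integral_qL_ge0 s t : 0 <= \int[mu]_z (q_t pY qphi x s z * L_f f g pYP z t).
  by apply: integral_ge0 => z _.
have integral_qLD s : \int[mu]_z (q_t pY qphi x s z * (L_f f g pYP z true + L_f f g pYP z false)) =
    \int[mu]_z (q_t pY qphi x s z * L_f f g pYP z true) +
    \int[mu]_z (q_t pY qphi x s z * L_f f g pYP z false).
  transitivity (\int[mu]_z (q_t pY qphi x s z * L_f f g pYP z true +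
                           q_t pY qphi x s z * L_f f g pYP z false)).
    by apply: eq_integral => z _; rewrite ge0_muleDr.
  by rewrite ge0_integralD //; exact: emeasurable_funM (measurable_q_t s) (mL _).
rewrite integral_q_mix; last 2 first.
- exact: emeasurable_funD.
- by move=> z; rewrite adde_ge0.
rewrite /eps_F /eps_CF /eps_F_t /eps_CF_t !big_bool /= !integral_qLD.
rewrite !(ge0_muleDr _ (integral_qL_ge0 _ true) (integral_qL_ge0 _ false)).
by rewrite addeACA [in RHS]addeACA [X in _ + X = _]addeC.
Qed.

End mixture.

Section loss.
Context {R : realType} {d : measure_display} {Z : measurableType d}.
Local Notation leb := (@lebesgue_measure R).
Variables (f g j : bool -> Z -> R) (pYP : bool -> Z -> R -> R) (G : R).
Hypotheses (mf : forall t, measurable_fun setT (f t))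
  (mg : forall t, measurable_fun setT (g t)) (g_neq0 : forall t z, g t z != 0%R)
  (gG : forall t z, (`|g t z| <= G)%R).
Hypotheses (pYP_ge0 : forall t z y, (0 <= pYP t z y)%R)
  (mpYP : forall t, measurable_fun setT (fun zy : Z * R => pYP t zy.1 zy.2))
  (pYP_int1 : forall t z, \int[leb]_y (pYP t z y)%:E = 1)
  (yp_int : forall t z, leb.-integrable setT (fun y => (y * pYP t z y)%:E))
  (y2p_int : forall t z, leb.-integrable setT (fun y => (y ^+ 2 * pYP t z y)%:E))
  (pYP_mean : forall t z, \int[leb]_y (y * pYP t z y)%:E = (j t z)%:E).

Definition cond_var t z : R := fine (\int[leb]_y (((y - j t z) ^+ 2) * pYP t z y)%:E).

Let mp t z : measurable_fun setT (pYP t z).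
Proof. exact: (measurable_fun_pair2 (f := fun zy : Z * R => pYP t zy.1 zy.2) z (mpYP t)). Qed.

Lemma cond_varE t z :
  \int[leb]_y (((y - j t z) ^+ 2) * pYP t z y)%:E = (cond_var t z)%:E.
Proof.
rewrite /cond_var fineK //; exact: integral_sqr_sub_fin_num (pYP_ge0 t z) (mp t z)
  (pYP_int1 t z) (yp_int t z) (y2p_int t z) (pYP_mean t z) (j t z).
Qed.

Lemma cond_var_ge0 t z : (0 <= cond_var t z)%R.
Proof.
by rewrite -lee_fin -cond_varE integral_ge0 // => y _; rewrite lee_fin mulr_ge0 ?sqr_ge0.
Qed.

Lemma L_fE t z : L_f f g pYP z t =
  ((g t z) ^- 2 * (cond_var t z + (f t z - j t z) ^+ 2))%:E.
Proof.
rewrite /L_f (integral_sqr_sub_mean (pYP_ge0 t z) (mp t z) (pYP_int1 t z)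
  (yp_int t z) (y2p_int t z) (pYP_mean t z)).
by rewrite cond_varE -EFinD -EFinM.
Qed.

Lemma L_f_ge0 t z : 0 <= L_f f g pYP z t.
Proof.
rewrite L_fE lee_fin mulr_ge0 ?invr_ge0 ?sqr_ge0 //.
by rewrite addr_ge0 ?cond_var_ge0 ?sqr_ge0.
Qed.

Lemma measurable_L_f t : measurable_fun setT (fun z => L_f f g pYP z t).
Proof.
apply: emeasurable_funM; last exact: measurable_fun_integral_sqr_sub.
apply/measurable_EFinP/measurable_funV_gt0; first exact: measurable_funX.
by move=> z; rewrite exprn_even_gt0 ?g_neq0.
Qed.

Lemma sqr_effect_err_add_cond_var_le z :
  (((f true z - f false z) - (j true z - j false z)) ^+ 2)%:E
  + 2%:E * \sum_(t : bool) \int[leb]_y (((y - j t z) ^+ 2) * pYP t z y)%:E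
  <= (2 * G ^+ 2)%:E * (L_f f g pYP z true + L_f f g pYP z false).
Proof.
rewrite big_bool !cond_varE !L_fE -!EFinD -!EFinM lee_fin.
have -> : (f true z - f false z - (j true z - j false z) =
           (f true z - j true z) - (f false z - j false z))%R by ring.
by apply: sqr_sub_variance_le; rewrite ?cond_var_ge0.
Qed.

End loss.

Theorem lemma3 (R : realType) (X : Type) (d : measure_display) (Z : measurableType d)
  (mu : {measure set Z -> \bar R})
  (pT : X -> bool -> R) (pY : X -> bool -> R -> R)
  (qphi : X -> R -> bool -> Z -> R) (pYP : bool -> Z -> R -> R)
  (f g j : bool -> Z -> R) (G : R) (x : X) :
  sigma_finite setT mu ->
  (* p(t|x) is a distribution on {0,1} *)
  (forall t, (0 <= pT x t)%R) -> (pT x true + pT x false = 1)%R ->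
  (* p(y|x,t) is a conditional density *)
  (forall t y, (0 <= pY x t y)%R) ->
  (forall t, measurable_fun setT (pY x t)) ->
  (forall t, \int[@lebesgue_measure R]_y (pY x t y)%:E = 1) ->
  (* q_phi(z|x,y,t) is a conditional density *)
  (forall y t z, (0 <= qphi x y t z)%R) ->
  (forall t, measurable_fun setT (fun yz : R * Z => qphi x yz.1 t yz.2)) ->
  (forall y t, \int[mu]_z (qphi x y t z)%:E = 1) ->
  (* p_{Y(t)|P_t}(y|P) is a conditional density with finite second moment *)
  (forall t z y, (0 <= pYP t z y)%R) ->
  (forall t, measurable_fun setT (fun zy : Z * R => pYP t zy.1 zy.2)) ->
  (forall t z, \int[@lebesgue_measure R]_y (pYP t z y)%:E = 1) ->
  (forall t z, (@lebesgue_measure R).-integrable setT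
                 (fun y => (y * pYP t z y)%:E)) ->
  (forall t z, (@lebesgue_measure R).-integrable setT
                 (fun y => (y ^+ 2 * pYP t z y)%:E)) ->
  (* E(Y(t) | P_t(X) = z) = j_t(z) *)
  (forall t z, \int[@lebesgue_measure R]_y (y * pYP t z y)%:E = (j t z)%:E) ->
  (* regularity of f_t, g_t, j_t *)
  (forall t, measurable_fun setT (f t)) ->
  (forall t, measurable_fun setT (g t)) ->
  (forall t, measurable_fun setT (j t)) ->
  (* |g_t(z)| <= G (and g_t(z) <> 0 so that g_t(z)^{-2} is meaningful) *)
  (forall t z, g t z != 0%R) ->
  (forall t z, (`|g t z| <= G)%R) ->
  (* finiteness of V_Y(x), so that the right-hand side is well defined *)
  V_Y mu pT pY qphi j pYP x < +oo ->
  eps_f mu pT pY qphi f j x <=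
    2%:E * ((G ^+ 2)%:E * (eps_F mu pT pY qphi f g pYP x + eps_CF mu pT pY qphi f g pYP x)
            - V_Y mu pT pY qphi j pYP x).
Proof.
(* Only nonnegativity and measurability of p(t|x), p(y|x,t) and q_phi matter: the bound holds
   pointwise in z before integrating against q(z|x), and mu need not be sigma-finite. *)
move=> _ pT_ge0 _ pY_ge0 mpY _ qphi_ge0 mqphi _ pYP_ge0 mpYP pYP_int1 yp_int y2p_int
  pYP_mean mf mg mj g_neq0 gG VY_fin.
have L_ge0 := L_f_ge0 f g pYP_ge0 mpYP pYP_int1 yp_int y2p_int pYP_mean.
have mL := measurable_L_f mf mg g_neq0 pYP_ge0 mpYP.
have err_ge0 t z : 0 <= \int[@lebesgue_measure R]_y (((y - j t z) ^+ 2) * pYP t z y)%:E.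
  by apply: integral_ge0 => y _; rewrite lee_fin mulr_ge0 ?sqr_ge0.
have VY_fin_num : V_Y mu pT pY qphi j pYP x \is a fin_num.
  rewrite ge0_fin_numE // integral_ge0 // => z _.
  by rewrite mule_ge0 ?q_mix_ge0 ?sume_ge0.
rewrite (eps_F_add_eps_CF mu pT_ge0 pY_ge0 mpY qphi_ge0 mqphi mL L_ge0).
rewrite muleBr ?fin_num_adde_defl ?fin_numN // leeBrDr ?fin_numM // muleA -EFinM.
apply: ge0_le_integral_weighted => //.
- by rewrite mulr_ge0 ?sqr_ge0.
- exact: measurable_q_mix.
- apply/measurable_EFinP/measurable_funX.
  by apply: measurable_funB; apply: measurable_funB.
- by apply: emeasurable_sum => t; exact: measurable_fun_integral_sqr_sub.
- exact: emeasurable_funD.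
- exact: q_mix_ge0.
- by move=> z; rewrite lee_fin sqr_ge0.
- by move=> z; rewrite sume_ge0.
- by move=> z; rewrite adde_ge0.
- exact: sqr_effect_err_add_cond_var_le.
Qed.
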